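(* Let $K\in\mathbb{Z}_{>0}$ and let $\{\mathcal{N}_j\}_{j=1}^K$ be a set of $K$ known $n$-qubit quantum channels. Let $\ell:[0,1]\to\mathbb{R}$ be convex and $L$-Lipschitz. There exists an online learning strategy that, when presented sequentially with channel test operators $E_{A,B}^{(t)}$, $t\in\{1,\dots,T\}$, and associated losses $\ell_t(\cdot)=\ell((\cdot)-b_t)$ with $b_t\in[0,1]$, outputs Choi matrix hypotheses of the form $N_{A,B}^{(t)}=\sum_{j=1}^K p_j^{(t)}C(\mathcal{N}_j)$ with $(p_1^{(t)},\dots,p_K^{(t)})$ a probability vector, such that \[ \sum_{t=1}^T \ell_t\big(\mathrm{Tr}[E_{A,B}^{(t)}N_{A,B}^{(t)}]\big) - \sum_{t=1}^T \ell_t\big(\mathrm{Tr}[E_{A,B}^{(t)}C_{A,B}^{\mathcal{N}}]\big) = \mathcal{O}\big(L\sqrt{T\log K}\big) \] for every $\mathcal{N}$ in the convex hull of $\{\mathcal{N}_j\}_{j=1}^K$.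
   Context: $A,B$ are $n$-qubit systems, $d=2^n$. The Choi matrix of a linear map $\mathcal{N}$ is $C(\mathcal{N})=C^{\mathcal{N}}_{A,B}=\sum_{i,j=0}^{d-1}|i\rangle\langle j|\otimes\mathcal{N}(|i\rangle\langle j|)$. A channel test operator is $E_{A,B}\geq0$ with $E_{A,B}\leq\sigma_A\otimes\mathbb{1}_B$ for some density operator $\sigma_A$. In round $t$ the adversary presents $E^{(t)}$, the learner outputs $N^{(t)}$ (depending only on past information) and predicts $\mathrm{Tr}[E^{(t)}N^{(t)}]$, then $b_t$ is revealed. *)

From HB Require Import structures.
From mathcomp Require Import all_boot all_order all_algebra.
From mathcomp Require Import complex mxtens.
From mathcomp Require Import reals exp.
Set Implicit Arguments. Unset Strict Implicit. Unset Printing Implicit Defensive.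
Import Order.TTheory GRing.Theory Num.Theory.
Local Open Scope ring_scope.

Section QDefs.
Variable R : realType.
Local Notation C := R[i].

Definition adjmx m n (A : 'M[C]_(m, n)) : 'M[C]_(n, m) := (map_mx Num.conj A)^T.

Definition psd m (A : 'M[C]_m) : Prop :=
  adjmx A = A /\ forall v : 'cV[C]_m, 0 <= ((adjmx v) *m A *m v) 0 0.

Definition loewner_le m (A B : 'M[C]_m) : Prop := psd (B - A).

Definition density m (rho : 'M[C]_m) : Prop := psd rho /\ \tr rho = 1.

Definition mxblock_at k d (X : 'M[C]_(k * d)) (a b : 'I_k) : 'M[C]_d :=
  \matrix_(i, j) X (mxtens_index (a, i)) (mxtens_index (b, j)).

(* (id_k (x) Phi)(X) *)
Definition ampliate k d (Phi : 'M[C]_d -> 'M[C]_d) (X : 'M[C]_(k * d)) : 'M[C]_(k * d) :=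
  \sum_(a < k) \sum_(b < k) (delta_mx a b *t Phi (mxblock_at X a b)).

Definition is_channel d (Phi : 'M[C]_d -> 'M[C]_d) : Prop :=
  [/\ (forall (c : C) (X Y : 'M[C]_d), Phi (c *: X + Y) = c *: Phi X + Phi Y),
      (forall (k : nat) (X : 'M[C]_(k * d)), psd X -> psd (ampliate Phi X))
    & (forall X : 'M[C]_d, \tr (Phi X) = \tr X)].

Definition choi d (Phi : 'M[C]_d -> 'M[C]_d) : 'M[C]_(d * d) :=
  \sum_(i < d) \sum_(j < d) (delta_mx i j *t Phi (delta_mx i j)).

Definition test_operator d (E : 'M[C]_(d * d)) : Prop :=
  psd E /\ exists sigma : 'M[C]_d, density sigma /\ loewner_le E (sigma *t (1%:M : 'M[C]_d)).

Definition prob_vec K (p : 'I_K -> R) : Prop :=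
  (forall j, 0 <= p j) /\ \sum_(j < K) p j = 1.

Definition rtr_prod m (E N : 'M[C]_m) : R := complex.Re (\tr (E *m N)).

Definition convex_on (a b : R) (f : R -> R) : Prop :=
  forall x y t, a <= x <= b -> a <= y <= b -> 0 <= t <= 1 ->
    f (t * x + (1 - t) * y) <= t * f x + (1 - t) * f y.

Definition lipschitz_on (a b : R) (L : R) (f : R -> R) : Prop :=
  forall x y, a <= x <= b -> a <= y <= b -> `|f x - f y| <= L * `|x - y|.

End QDefs.

(* For a channel N and a test operator 0 <= E <= sigma (x) 1, the Choi matrix is
   positive semidefinite and Tr[(sigma (x) 1) C(N)] = Tr sigma = 1, so
   x_j := Re Tr[E C(N_j)] lies in [0, 1]; moreover Tr[E C(N)] is linear in the
   mixture weights. The problem thus becomes online convex optimisation over the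
   probability simplex with losses p |-> ell (<p, x_t> - b_t). A convex L-Lipschitz
   ell has at every point a subgradient s with |s| <= L (the supremum of the
   left difference quotients), and by convexity the regret is bounded by the
   linearised regret sum_t s_t <p_t - q, x_t>. Exponential weights on the gains
   s_t x_t (exponentiated gradient) make the latter at most
   ln K / eta + 2 eta T L^2, and eta = sqrt (T ln K) / (2 L T) gives
   3 L sqrt (T ln K). *)

From HB Require Import structures.
From mathcomp Require Import all_boot all_order all_algebra.
From mathcomp Require Import complex mxtens.
From mathcomp Require Import reals exp.
From mathcomp Require Import sesquilinear spectral.
From mathcomp Require Import classical_sets boolp sequences.
From mathcomp Require Import ring lra.
Import Order.TTheory GRing.Theory Num.Theory.
Set Implicit Arguments. Unset Strict Implicit. Unset Printing Implicit Defensive.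
Local Open Scope ring_scope.

Lemma big_mxtens_index (V : nmodType) m n (F : 'I_(m * n) -> V) :
  \sum_k F k = \sum_(i < m) \sum_(j < n) F (mxtens_index (i, j)).
Proof.
rewrite pair_big /= (reindex (@mxtens_index m n)) /=; first by apply: eq_bigr => -[].
by exists (@mxtens_unindex m n) => k _; rewrite ?mxtens_indexK ?mxtens_unindexK.
Qed.

Lemma mxtrace_tens (R : comPzRingType) m n (A : 'M[R]_m) (B : 'M[R]_n) :
  \tr (A *t B) = \tr A * \tr B.
Proof.
rewrite /mxtrace big_mxtens_index mulr_suml; apply: eq_bigr => i _.
by rewrite mulr_sumr; apply: eq_bigr => j _; rewrite tensmxE.
Qed.

Lemma tensmx_sumZr (R : comPzRingType) I (r : seq I) m n p q (A : 'M[R]_(m, n))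
    (c : I -> R) (B : I -> 'M[R]_(p, q)) :
  A *t (\sum_(j <- r) c j *: B j) = \sum_(j <- r) c j *: (A *t B j).
Proof.
apply/matrixP => i k; rewrite !mxE !summxE mulr_sumr.
by apply: eq_bigr => j _; rewrite !mxE mulrCA.
Qed.

Lemma mxtrace_delta (R : pzRingType) n (i j : 'I_n) :
  \tr (delta_mx i j : 'M[R]_n) = (i == j)%:R.
Proof.
rewrite /mxtrace (bigD1 i) //= big1 ?addr0 => [|k /negbTE nki]; rewrite mxE ?eqxx //.
by rewrite nki.
Qed.

Lemma mxtrace_mul_delta (R : pzRingType) n (A : 'M[R]_n) (i j : 'I_n) :
  \tr (A *m delta_mx i j) = A j i.
Proof.
rewrite /mxtrace (bigD1 j) //= big1 ?addr0 => [|k /negbTE nkj]; rewrite mxE.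
  rewrite (bigD1 i) //= big1 ?addr0 => [|l /negbTE nli]; rewrite mxE ?eqxx ?mulr1 //.
  by rewrite nli mulr0.
by rewrite big1 // => l _; rewrite mxE nkj andbF mulr0.
Qed.

Section ChoiMatrix.
Variable R : realType.
Local Notation C := R[i].

Lemma adjmxE m n (A : 'M[C]_(m, n)) i j : adjmx A i j = (A j i)^*.
Proof. by rewrite /adjmx !mxE. Qed.

Lemma adjmxK m n (A : 'M[C]_(m, n)) : adjmx (adjmx A) = A.
Proof. by apply/matrixP=> i j; rewrite !adjmxE conjCK. Qed.

Lemma adjmx_mul m n p (A : 'M[C]_(m, n)) (B : 'M[C]_(n, p)) :
  adjmx (A *m B) = adjmx B *m adjmx A.
Proof.
apply/matrixP=> i j; rewrite adjmxE !mxE rmorph_sum; apply: eq_bigr => k _.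
by rewrite !adjmxE rmorphM mulrC.
Qed.

Lemma adjmx_trmxC m n (A : 'M[C]_(m, n)) : adjmx A = (A ^t* )%sesqui.
Proof. by apply/matrixP=> i j; rewrite adjmxE !mxE. Qed.

Lemma psd_normalmx m (A : 'M[C]_m) : psd A -> A \is normalmx.
Proof. by case=> hermA _; apply/normalmxP; rewrite -adjmx_trmxC hermA. Qed.

Lemma psd_conj_diag_ge0 m (P A : 'M[C]_m) i :
  psd A -> 0 <= (P *m A *m (P ^t* )%sesqui) i i.
Proof.
case=> _ /(_ (col i (P ^t* )%sesqui)); congr (0 <= _); rewrite !mxE.
apply: eq_bigr => k _; rewrite !mxE; congr (_ * _).
by apply: eq_bigr => l _; rewrite adjmxE !mxE conjCK.
Qed.

Lemma mxtrace_mul_psd_ge0 m (A B : 'M[C]_m) : psd A -> psd B -> 0 <= \tr (A *m B).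
Proof.
(* Diagonalise A unitarily: Tr[A B] becomes a sum of products of diagonal
   entries of unitary conjugates of A and B, all of which are nonnegative. *)
move=> psdA psdB; have /orthomx_spectralP defA := psd_normalmx psdA.
set P := spectralmx A in defA; set D := spectral_diag A in defA.
have unitP : P \is unitarymx := spectral_unitarymx A.
have PPt : P *m (P ^t* )%sesqui = 1%:M by apply/unitarymxP.
rewrite invmx_unitary // in defA.
have defD : diag_mx D = P *m A *m (P ^t* )%sesqui.
  by rewrite defA !mulmxA PPt mul1mx -mulmxA PPt mulmx1.
have -> : \tr (A *m B) = \tr (diag_mx D *m (P *m B *m (P ^t* )%sesqui)).
  by rewrite defA -!mulmxA mxtrace_mulC -!mulmxA.
rewrite mul_diag_mx /mxtrace; apply: sumr_ge0 => i _; rewrite mxE.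
have -> : D 0 i = (P *m A *m (P ^t* )%sesqui) i i by rewrite -defD mxE eqxx mulr1n.
by apply: mulr_ge0; apply: psd_conj_diag_ge0.
Qed.

Lemma psd_mul_adjmx m (u : 'cV[C]_m) : psd (u *m adjmx u).
Proof.
split=> [|v]; first by rewrite adjmx_mul adjmxK.
rewrite !mulmxA -mulmxA mxE big_ord1 -[u in adjmx v *m u]adjmxK -adjmx_mul.
by rewrite adjmxE mulrC mul_conjC_ge0.
Qed.

(* [\sum_i |i>|i>], unnormalised *)
Definition max_entangled d : 'cV[C]_(d * d) :=
  \col_k ((mxtens_unindex k).1 == (mxtens_unindex k).2)%:R.

Lemma mxblock_at_max_entangled d (a b : 'I_d) :
  mxblock_at (max_entangled d *m adjmx (max_entangled d)) a b = delta_mx a b.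
Proof.
apply/matrixP => i j; rewrite !mxE big_ord1 adjmxE !mxE !mxtens_indexK /=.
by rewrite rmorph_nat -natrM mulnb [i == a]eq_sym [j == b]eq_sym.
Qed.

Lemma choi_ampliate d (N : 'M[C]_d -> 'M[C]_d) :
  choi N = ampliate N (max_entangled d *m adjmx (max_entangled d)).
Proof.
by apply: eq_bigr => a _; apply: eq_bigr => b _; rewrite mxblock_at_max_entangled.
Qed.

Lemma choi_psd d (N : 'M[C]_d -> 'M[C]_d) : is_channel N -> psd (choi N).
Proof. by case=> _ cpN _; rewrite choi_ampliate; apply/cpN/psd_mul_adjmx. Qed.

Lemma mxtrace_tens1_mul_choi d (N : 'M[C]_d -> 'M[C]_d) (s : 'M[C]_d) :
  is_channel N -> \tr ((s *t (1%:M : 'M[C]_d)) *m choi N) = \tr s.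
Proof.
case=> _ _ trN; rewrite mulmx_sumr raddf_sum [RHS]/mxtrace; apply: eq_bigr => i _.
rewrite mulmx_sumr raddf_sum (bigD1 i) //= big1 ?addr0 => [|j /negbTE nji].
  by rewrite tensmx_mul mul1mx mxtrace_tens trN mxtrace_delta mxtrace_mul_delta eqxx mulr1.
by rewrite tensmx_mul mul1mx mxtrace_tens trN mxtrace_delta eq_sym nji mulr0.
Qed.

Lemma rtr_prod_choi_ge0_le1 d (E : 'M[C]_(d * d)) (N : 'M[C]_d -> 'M[C]_d) :
  test_operator E -> is_channel N -> 0 <= rtr_prod E (choi N) <= 1.
Proof.
move=> [psdE [s [[_ trs] psdsE]]] chN; have psdN := choi_psd chN.
have Re_ge0 (z : C) : 0 <= z -> 0 <= complex.Re z by rewrite lecE => /andP[].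
apply/andP; split; first exact/Re_ge0/mxtrace_mul_psd_ge0.
rewrite -(subKr (s *t 1%:M) E) /rtr_prod mulmxBl raddfB /= mxtrace_tens1_mul_choi //.
by rewrite trs raddfB /= gerBl; apply/Re_ge0/mxtrace_mul_psd_ge0.
Qed.

Lemma choi_sumZ K d (c : 'I_K -> C) (N : 'I_K -> 'M[C]_d -> 'M[C]_d) :
  choi (fun X => \sum_(j < K) c j *: N j X) = \sum_(j < K) c j *: choi (N j).
Proof.
rewrite /choi; under eq_bigr do under eq_bigr do rewrite tensmx_sumZr.
under [RHS]eq_bigr do rewrite scaler_sumr.
under [RHS]eq_bigr do under eq_bigr do rewrite scaler_sumr.
by rewrite [RHS]exchange_big; apply: eq_bigr => a _; rewrite [RHS]exchange_big.
Qed.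

Lemma rtr_prod_sumZ K m (E : 'M[C]_m) (p : 'I_K -> R) (M : 'I_K -> 'M[C]_m) :
  rtr_prod E (\sum_(j < K) real_complex R (p j) *: M j)
  = \sum_(j < K) p j * rtr_prod E (M j).
Proof.
rewrite /rtr_prod mulmx_sumr (raddf_sum (@mxtrace _ m)) raddf_sum.
apply: eq_bigr => j _ /=.
by rewrite -scalemxAr mxtraceZ; case: (\tr _) => a b /=; rewrite mul0r subr0.
Qed.

End ChoiMatrix.

Lemma expR_le_quadratic (R : realType) (y : R) : y <= 1 / 2 -> expR y <= 1 + y + 2 * y ^+ 2.
Proof.
move=> y_le; have y_lt1 : 0 < 1 - y by lra.
have le_expRN : 1 - y <= expR (- y) by apply: expR_ge1Dx.
rewrite -[y]opprK expRN opprK; apply: (@le_trans _ _ (1 - y)^-1).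
  by rewrite lef_pV2 // posrE expR_gt0.
rewrite -[(1 - y)^-1]mul1r ler_pdivrMr //.
have : 0 <= y ^+ 2 * (1 - 2 * y) by apply: mulr_ge0; [exact: sqr_ge0 | lra].
lra.
Qed.

Section ExponentialWeights.
Variables (R : realType) (K : nat) (eta : R).

Definition exp_weights (c : 'I_K -> R) (j : 'I_K) : R :=
  expR (- (eta * c j)) / \sum_k expR (- (eta * c k)).

Hypothesis K_gt0 : (0 < K)%N.

Lemma sum_expR_gt0 (c : 'I_K -> R) : 0 < \sum_k expR (- (eta * c k)).
Proof.
rewrite (bigD1 (Ordinal K_gt0)) //= ltr_pwDl ?expR_gt0 //.
by rewrite sumr_ge0 // => k _; rewrite ltW ?expR_gt0.
Qed.

Lemma exp_weights_prob (c : 'I_K -> R) : prob_vec (exp_weights c).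
Proof.
split=> [j|]; first by rewrite divr_ge0 ?ltW ?expR_gt0 ?sum_expR_gt0.
by rewrite -mulr_suml divff // gt_eqF ?sum_expR_gt0.
Qed.

Hypothesis eta_ge0 : 0 <= eta.

Lemma mean_expR_le (p g : 'I_K -> R) G : prob_vec p ->
  (forall k, `|g k| <= G) -> eta * G <= 1 / 2 ->
  \sum_k p k * expR (- (eta * g k))
    <= expR (- (eta * \sum_k p k * g k) + 2 * eta ^+ 2 * G ^+ 2).
Proof.
move=> [p_ge0 p_sum1] g_le etaG_le.
apply: le_trans (expR_ge1Dx _).
have -> : 1 + (- (eta * \sum_k p k * g k) + 2 * eta ^+ 2 * G ^+ 2)
    = \sum_k p k * (1 - eta * g k + 2 * eta ^+ 2 * G ^+ 2).
  rewrite [RHS](eq_bigr (fun k => p k - eta * (p k * g k) + p k * (2 * eta ^+ 2 * G ^+ 2))).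
    by rewrite !big_split /= sumrN -mulr_sumr -mulr_suml p_sum1 mul1r addrA.
  by move=> k _; ring.
apply: ler_sum => k _; apply: ler_wpM2l => //.
have etag_le : `|eta * g k| <= eta * G by rewrite normrM ger0_norm // ler_wpM2l.
have : (eta * g k) ^+ 2 <= (eta * G) ^+ 2.
  by rewrite -real_normK ?num_real // ler_sqr ?nnegrE ?mulr_ge0 // (le_trans _ (g_le k)).
move: etag_le; rewrite ler_norml => /andP[etag_ge etag_le'].
have := expR_le_quadratic (y := - (eta * g k)) ltac:(lra).
rewrite sqrrN exprMn; lra.
Qed.

Section Hedge.
Variables (g : nat -> 'I_K -> R) (G : R).
Hypotheses (g_le : forall t k, `|g t k| <= G) (etaG_le : eta * G <= 1 / 2).

Definition cumloss t k := \sum_(s < t) g s k.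
Definition hedge t := exp_weights (cumloss t).
Definition potential t := \sum_k expR (- (eta * cumloss t k)).

Lemma potentialS t :
  potential t.+1 = potential t * \sum_k hedge t k * expR (- (eta * g t k)).
Proof.
rewrite /potential mulr_sumr; apply: eq_bigr => k _.
rewrite /cumloss big_ord_recr /= /hedge /exp_weights mulrA mulrCA divff ?mulr1.
  by rewrite mulrDr opprD expRD.
by rewrite gt_eqF ?sum_expR_gt0.
Qed.

Lemma potential_le T :
  potential T <= K%:R * expR (- (eta * \sum_(t < T) \sum_k hedge t k * g t k)
                              + T%:R * (2 * eta ^+ 2 * G ^+ 2)).
Proof.
elim: T => [|T IH].
  rewrite big_ord0 mulr0 oppr0 mul0r addr0 expR0 mulr1 /potential.
  under eq_bigr do rewrite /cumloss big_ord0 mulr0 oppr0 expR0.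
  by rewrite sumr_const card_ord.
have hedge_prob := exp_weights_prob (cumloss T).
have mean_ge0 : 0 <= \sum_k hedge T k * expR (- (eta * g T k)).
  by rewrite sumr_ge0 // => k _; rewrite mulr_ge0 ?(proj1 hedge_prob) ?ltW ?expR_gt0.
rewrite potentialS; apply: le_trans (ler_pM (ltW (sum_expR_gt0 _)) mean_ge0 IH
  (mean_expR_le hedge_prob (g_le T) etaG_le)) _.
rewrite -[K%:R * _ * _]mulrA -expRD big_ord_recr /= -[T.+1%:R]natr1.
by rewrite ler_wpM2l ?ler0n // ler_expR; lra.
Qed.

Lemma hedge_regret T j :
  eta * (\sum_(t < T) \sum_k hedge t k * g t k - cumloss T j)
    <= ln K%:R + T%:R * (2 * eta ^+ 2 * G ^+ 2).
Proof.
have : expR (- (eta * cumloss T j)) <= potential T.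
  by rewrite /potential (bigD1 j) //= lerDl sumr_ge0 // => k _; rewrite ltW ?expR_gt0.
move/le_trans/(_ (potential_le T)).
rewrite -[X in _ <= X * _]lnK ?posrE ?ltr0n // -expRD ler_expR.
lra.
Qed.

End Hedge.
End ExponentialWeights.

Section BoundedSubgradient.
Variables (R : realType) (lo hi L : R) (f : R -> R).

Definition bounded_subgradient (a s : R) : Prop :=
  `|s| <= L /\ forall c, lo <= c <= hi -> f a + s * (c - a) <= f c.

(* [lra] ignores section hypotheses, hence the local copies of [lo_lt_hi] below. *)
Hypotheses (lo_lt_hi : lo < hi) (f_convex : convex_on lo hi f)
  (f_lipschitz : lipschitz_on lo hi L f).

Lemma convex_slope_le y a c : lo <= y -> y < a -> a < c -> c <= hi ->
  (f a - f y) / (a - y) <= (f c - f a) / (c - a).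
Proof.
move=> loy ya ac chi; have cy : 0 < c - y by lra.
pose t := (c - a) / (c - y).
have t_ge0 : 0 <= t by rewrite divr_ge0 //; lra.
have t_le1 : t <= 1 by rewrite ler_pdivrMr // mul1r; lra.
have fa_le : f a <= t * f y + (1 - t) * f c.
  have -> : a = t * y + (1 - t) * c by rewrite /t; field; lra.
  by apply: f_convex; lra.
have {}fa_le : (c - y) * f a <= (c - a) * f y + (a - y) * f c.
  have -> : (c - a) * f y + (a - y) * f c = (c - y) * (t * f y + (1 - t) * f c).
    by rewrite /t; field; lra.
  by rewrite ler_wpM2l //; lra.
rewrite ler_pdivrMr; last lra.
rewrite mulrAC ler_pdivlMr; last lra.
nra.
Qed.

Lemma lipschitz_ge0 : 0 <= L.
Proof.
have lohi := lo_lt_hi.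
have := @f_lipschitz lo hi ltac:(lra) ltac:(lra).
rewrite [`|lo - hi|]ltr0_norm; last lra.
have := normr_ge0 (f lo - f hi); nra.
Qed.

Lemma slope_norm_le y a : lo <= y <= hi -> lo <= a <= hi -> y != a ->
  `|(f a - f y) / (a - y)| <= L.
Proof.
move=> yin ain ya; have ay : a - y != 0 by rewrite subr_eq0 eq_sym.
by rewrite normrM normfV ler_pdivrMr ?normr_gt0 //; apply: f_lipschitz.
Qed.

Lemma bounded_subgradient_lo : bounded_subgradient lo (- L).
Proof.
split=> [|c cin]; first by rewrite normrN ger0_norm // lipschitz_ge0.
have lohi := lo_lt_hi.
have := @f_lipschitz c lo cin ltac:(lra).
rewrite [`|c - lo|]ger0_norm ?ler_norml; last lra.
by case/andP; nra.
Qed.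

Definition left_slopes a := [set (f a - f y) / (a - y) | y in [set y | lo <= y < a]]%classic.

Lemma bounded_subgradient_sup_left_slopes a : lo < a <= hi ->
  bounded_subgradient a (sup (left_slopes a)).
Proof.
move=> /andP[lo_a a_hi]; have lohi := lo_lt_hi.
have slope_bound y : lo <= y < a -> `|(f a - f y) / (a - y)| <= L.
  by move=> yin; apply: slope_norm_le; lra.
have slope_lo : left_slopes a ((f a - f lo) / (a - lo)) by exists lo => //; rewrite /mkset lexx.
have ub : ubound (left_slopes a) L.
  by move=> _ [y yin <-]; have := slope_bound y yin; rewrite ler_norml => /andP[].
have sup_s : has_sup (left_slopes a) by split; [exists ((f a - f lo) / (a - lo)) | exists L].
split.
  rewrite ler_norml ge_sup ?andbT //; last by exists ((f a - f lo) / (a - lo)).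
  have := slope_bound lo ltac:(lra); rewrite ler_norml => /andP[+ _].
  by move/le_trans; apply; apply: sup_upper_bound.
move=> c /andP[lo_c c_hi]; case: (ltgtP c a) => [c_a | a_c | ->]; last first.
- by rewrite subrr mulr0 addr0.
- have : sup (left_slopes a) <= (f c - f a) / (c - a).
    apply: ge_sup => //; first by exists ((f a - f lo) / (a - lo)).
    by move=> _ [y /andP[lo_y y_a] <-]; apply: convex_slope_le.
  rewrite ler_pdivlMr; last lra.
  lra.
- have : (f a - f c) / (a - c) <= sup (left_slopes a).
    by apply: sup_upper_bound => //; exists c => //; rewrite /mkset lo_c c_a.
  rewrite ler_pdivrMr; last lra.
  nra.
Qed.

Lemma exists_bounded_subgradient a : lo <= a <= hi -> exists s, bounded_subgradient a s.
Proof.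
case: (eqVneq a lo) => [-> _|a_lo a_in]; first by exists (- L); exact: bounded_subgradient_lo.
exists (sup (left_slopes a)); apply: bounded_subgradient_sup_left_slopes.
by rewrite lt_neqAle eq_sym a_lo; case/andP: a_in => -> ->.
Qed.

End BoundedSubgradient.

Section Dot.
Variable R : realType.

Definition dot K (p y : 'I_K -> R) : R := \sum_k p k * y k.

Lemma dot_in01 K (p y : 'I_K -> R) :
  prob_vec p -> (forall j, 0 <= y j <= 1) -> 0 <= dot p y <= 1.
Proof.
move=> [p_ge0 p_sum1] y01; apply/andP; split.
  by apply: sumr_ge0 => j _; apply: mulr_ge0 => //; case/andP: (y01 j).
by rewrite -p_sum1; apply: ler_sum => j _; rewrite ler_piMr //; case/andP: (y01 j).
Qed.

Lemma dot_prob_vec_card1 K (p q y : 'I_K -> R) :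
  K = 1%N -> prob_vec p -> prob_vec q -> dot p y = dot q y.
Proof.
by move=> K1; subst K => -[_ p1] [_ q1]; rewrite /dot !big_ord1 in p1 q1 *; rewrite p1 q1.
Qed.

End Dot.

(* Junk value 0 when L = 0 or T = 0, where the trivial bound T L is used instead. *)
Definition eg_rate (R : realType) (L : R) (K T : nat) : R :=
  Num.sqrt (T%:R * ln K%:R) / (2 * L * T%:R).

Section ExponentiatedGradient.
Variables (R : realType) (K : nat) (sg : R -> R) (x : nat -> 'I_K -> R) (b : nat -> R).

Fixpoint eg_cumgrad (eta : R) t : 'I_K -> R :=
  if t is s.+1 then
    let p := exp_weights eta (eg_cumgrad eta s) in
    fun j => eg_cumgrad eta s j + sg (dot p (x s) - b s) * x s j
  else fun=> 0.

Definition eg_weights eta t := exp_weights eta (eg_cumgrad eta t).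

Definition eg_grad eta t j := sg (dot (eg_weights eta t) (x t) - b t) * x t j.

Lemma eg_weightsE eta t : eg_weights eta t = hedge eta (eg_grad eta) t.
Proof.
rewrite /eg_weights /hedge; congr exp_weights; apply/funext => j.
by elim: t => [|t IH] /=; rewrite ?IH /cumloss ?big_ord0 // big_ord_recr.
Qed.

Variables (L : R) (ell : R -> R).
Hypotheses (K_gt0 : (0 < K)%N)
  (sg_sub : forall a, -1 <= a <= 1 -> bounded_subgradient (-1) 1 L ell a (sg a))
  (x01 : forall t j, 0 <= x t j <= 1) (b01 : forall t, 0 <= b t <= 1).

Lemma eg_weights_prob eta t : prob_vec (eg_weights eta t).
Proof. exact: exp_weights_prob. Qed.

Let pred eta t := dot (eg_weights eta t) (x t).

Lemma eg_regret_le_linearized eta T q : prob_vec q ->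
  \sum_(t < T) ell (pred eta t - b t) - \sum_(t < T) ell (dot q (x t) - b t)
    <= \sum_(t < T) sg (pred eta t - b t) * (pred eta t - dot q (x t)).
Proof.
move=> q_prob; rewrite -sumrB; apply: ler_sum => t _.
have := dot_in01 (eg_weights_prob eta t) (x01 t).
have := dot_in01 q_prob (x01 t); have := b01 t.
rewrite -/(pred eta t); set A := pred eta t; set B := dot q (x t) => bt Bin Ain.
have [_ /(_ (B - b t))] := @sg_sub (A - b t) ltac:(lra).
by move=> /(_ ltac:(lra)); lra.
Qed.

Lemma linearized_regret_le_TL eta T q : prob_vec q ->
  \sum_(t < T) sg (pred eta t - b t) * (pred eta t - dot q (x t)) <= T%:R * L.
Proof.
move=> q_prob; rewrite mulr_natl -[in L *+ T](card_ord T) -sumr_const.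
apply: ler_sum => t _.
have := dot_in01 (eg_weights_prob eta t) (x01 t).
have := dot_in01 q_prob (x01 t); have := b01 t.
rewrite -/(pred eta t); set A := pred eta t; set B := dot q (x t) => bt Bin Ain.
have [sgL _] := @sg_sub (A - b t) ltac:(lra).
apply: le_trans (ler_norm _) _; rewrite normrM -[L]mulr1.
by apply: ler_pM => //; rewrite ler_norml; lra.
Qed.

Lemma eg_grad_norm_le eta t j : `|eg_grad eta t j| <= L.
Proof.
have := dot_in01 (eg_weights_prob eta t) (x01 t); have := b01 t => bt pin.
have [sgL _] := @sg_sub (dot (eg_weights eta t) (x t) - b t) ltac:(lra).
rewrite normrM -[L]mulr1; apply: ler_pM => //.
by rewrite ger0_norm; case/andP: (x01 t j).
Qed.

Lemma linearized_regret_hedge eta T q : prob_vec q -> 0 <= eta -> eta * L <= 1 / 2 ->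
  eta * \sum_(t < T) sg (pred eta t - b t) * (pred eta t - dot q (x t))
    <= ln K%:R + T%:R * (2 * eta ^+ 2 * L ^+ 2).
Proof.
move=> [q_ge0 q_sum1] eta_ge0 etaL.
pose g := eg_grad eta.
have round t : sg (pred eta t - b t) * (pred eta t - dot q (x t))
    = \sum_k hedge eta g t k * g t k - \sum_j q j * g t j.
  rewrite -eg_weightsE mulrBr /pred /dot !mulr_sumr.
  by congr (_ - _); apply: eq_bigr => k _; rewrite /g /eg_grad; ring.
have -> : \sum_(t < T) sg (pred eta t - b t) * (pred eta t - dot q (x t))
    = \sum_j q j * (\sum_(t < T) \sum_k hedge eta g t k * g t k - cumloss g T j).
  under eq_bigr do rewrite round.
  under [RHS]eq_bigr do rewrite mulrBr.
  rewrite !sumrB -mulr_suml q_sum1 mul1r; congr (_ - _).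
  by under [RHS]eq_bigr do rewrite /cumloss mulr_sumr; rewrite exchange_big.
have hedge_j j : eta * (\sum_(t < T) \sum_k hedge eta g t k * g t k - cumloss g T j)
    <= ln K%:R + T%:R * (2 * eta ^+ 2 * L ^+ 2).
  by apply: hedge_regret => // t k; exact: eg_grad_norm_le.
rewrite mulr_sumr; under eq_bigr do rewrite mulrCA.
apply: le_trans (ler_sum _ (fun j _ => ler_wpM2l (q_ge0 j) (hedge_j j))) _.
by rewrite -mulr_suml q_sum1 mul1r.
Qed.

Lemma eg_tuned_regret T q : prob_vec q ->
  \sum_(t < T) ell (dot (eg_weights (eg_rate L K T) t) (x t) - b t)
    - \sum_(t < T) ell (dot q (x t) - b t)
    <= 3 * L * Num.sqrt (T%:R * ln K%:R).
Proof.
rewrite /eg_rate; set r := Num.sqrt _; set eta := r / _ => q_prob.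
apply: le_trans (eg_regret_le_linearized eta T q_prob) _.
have L_ge0 : 0 <= L.
  by have [sg0_le _] := @sg_sub 0 ltac:(lra); exact: le_trans (normr_ge0 _) sg0_le.
have r_ge0 : 0 <= r := sqrtr_ge0 _.
have [K1|K_neq1] := eqVneq K 1%N.
  rewrite big1 ?mulr_ge0 // => t _.
  by rewrite /pred (dot_prob_vec_card1 _ K1 (eg_weights_prob eta t) q_prob) subrr mulr0.
have [TL_le|TL_gt] := lerP (T%:R * L) (3 * L * r).
  exact: le_trans (linearized_regret_le_TL eta T q_prob) TL_le.
have L_gt0 : 0 < L.
  rewrite lt_neqAle L_ge0 andbT; apply: contraTneq TL_gt => <-.
  by rewrite !(mulr0, mul0r) ltxx.
have T_gt0 : 0 < T%:R :> R by rewrite -(pmulr_lgt0 _ L_gt0); apply: le_lt_trans TL_gt; rewrite !mulr_ge0.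
have lnK_gt0 : 0 < ln K%:R :> R by rewrite ln_gt0 // ltr1n ltn_neqAle eq_sym K_neq1.
have r_gt0 : 0 < r by rewrite sqrtr_gt0 mulr_gt0.
have r2 : r ^+ 2 = T%:R * ln K%:R by rewrite sqr_sqrtr // mulr_ge0 // ltW.
have eta_gt0 : 0 < eta by rewrite divr_gt0 // !mulr_gt0.
have etaL : eta * L = r / (2 * T%:R) by rewrite /eta; field; rewrite !gt_eqF.
have rT : 3 * r < T%:R by rewrite -(ltr_pM2r L_gt0) mulrAC.
have bound : ln K%:R + T%:R * (2 * eta ^+ 2 * L ^+ 2) = eta * (3 * L * r).
  have -> : ln K%:R = r ^+ 2 / T%:R by rewrite r2 mulrC mulKf ?gt_eqF.
  by rewrite /eta; field; rewrite !gt_eqF.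
rewrite -(ler_pM2l eta_gt0) -bound; apply: linearized_regret_hedge => //; first exact: ltW.
by rewrite etaL ler_pdivrMr ?mulr_gt0 //; lra.
Qed.

End ExponentiatedGradient.

Lemma eg_weights_causal (R : realType) K (sg : R -> R) (x x' : nat -> 'I_K -> R)
    (b b' : nat -> R) eta t :
  (forall s, (s < t)%N -> x s = x' s /\ b s = b' s) ->
  eg_weights sg x b eta t = eg_weights sg x' b' eta t.
Proof.
move=> past; congr exp_weights.
elim: t past => [//|t IH] past /=.
rewrite IH => [|s s_lt]; last exact/past/ltnW.
by have [-> ->] := past t (ltnSn t).
Qed.

Theorem corollary3p6 (R : realType) :
  exists c : R, 0 < c /\
  forall (n K : nat)
         (Ns : 'I_K -> 'M[R[i]]_(2 ^ n) -> 'M[R[i]]_(2 ^ n))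
         (ell : R -> R) (L : R),
    (0 < K)%N ->
    (forall j, is_channel (Ns j)) ->
    convex_on (-1) 1 ell ->
    lipschitz_on (-1) 1 L ell ->
    forall T : nat,
    exists strat : nat -> (nat -> 'M[R[i]]_(2 ^ n * 2 ^ n)) -> (nat -> R) -> 'I_K -> R,
      (* the output in round t depends only on past information (rounds s < t) *)
      (forall (t : nat) (E E' : nat -> 'M[R[i]]_(2 ^ n * 2 ^ n)) (b b' : nat -> R),
          (forall s, (s < t)%N -> E s = E' s /\ b s = b' s) ->
          strat t E b =1 strat t E' b') /\
      (* it outputs probability vectors *)
      (forall t E b, prob_vec (strat t E b)) /\
      (* regret bound against every channel in the convex hull *)
      (forall (E : nat -> 'M[R[i]]_(2 ^ n * 2 ^ n)) (b : nat -> R),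
          (forall t, test_operator (E t)) ->
          (forall t, 0 <= b t <= 1) ->
          forall q : 'I_K -> R, prob_vec q ->
          let Nt := fun t => \sum_(j < K) real_complex R (strat t E b j) *: choi (Ns j) in
          let Nhull := fun X => \sum_(j < K) real_complex R (q j) *: Ns j X in
          \sum_(t < T) ell (rtr_prod (E t) (Nt t) - b t)
            - \sum_(t < T) ell (rtr_prod (E t) (choi Nhull) - b t)
          <= c * L * Num.sqrt (T%:R * ln (K%:R : R))).
Proof.
exists 3; split=> [|n K Ns ell L K_gt0 Ns_channel ell_convex ell_lip T]; first lra.
have /choice[sg sg_sub] :
    forall a, exists s, -1 <= a <= 1 -> bounded_subgradient (-1) 1 L ell a s.
  move=> a; have [a_in|a_out] := boolP (-1 <= a <= 1); last by exists 0 => /negP.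
  have [|s s_sub] := exists_bounded_subgradient _ ell_convex ell_lip a_in; first lra.
  by exists s.
pose x (E : nat -> 'M_(2 ^ n * 2 ^ n)) t j := rtr_prod (E t) (choi (Ns j)).
exists (fun t E b => eg_weights sg (x E) b (eg_rate L K T) t); split.
  move=> t E E' b b' past j; congr (_ j); apply: eg_weights_causal => s /past[Es ->].
  by rewrite /x Es.
split=> [t E b|E b E_test b01 q q_prob /=]; first exact: eg_weights_prob.
rewrite choi_sumZ; under eq_bigr do rewrite rtr_prod_sumZ.
under [X in _ - X]eq_bigr do rewrite rtr_prod_sumZ.
apply: (eg_tuned_regret (ell := ell)) => // t j.
exact: rtr_prod_choi_ge0_le1.
Qed.
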